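(* Let $1\le k\le n$, let $A\in\mathbb{R}^{n\times n}$, and consider $f(Q)=\langle A,Q\rangle=\operatorname{tr}(A^{\mathsf T}Q)$ on $\mathrm{Gr}(k,n)=\{Q\in\mathrm{O}(n): Q^{\mathsf T}=Q,\ \operatorname{tr}(Q)=2k-n\}$, equipped with the Riemannian metric $\langle X,Y\rangle_Q=\operatorname{tr}(XY)$ on tangent spaces. Then the Riemannian gradient of $f$ is \[ \nabla f(Q)=\tfrac14\big(A+A^{\mathsf T}-QAQ-QA^{\mathsf T}Q\big). \] Let $(A+A^{\mathsf T})/2=U\Lambda U^{\mathsf T}$ be an eigendecomposition with $U\in\mathrm{O}(n)$, $\Lambda=\operatorname{diag}(\lambda_1,\dots,\lambda_n)$, $\lambda_1\ge\cdots\ge\lambda_n$. Then $Q^*=UI_{k,n-k}U^{\mathsf T}$ is a maximizer of $f$ over $\mathrm{Gr}(k,n)$, and for every $Q\in\mathrm{Gr}(k,n)$, \[ 2\|\Lambda\|\,(f(Q^* )-f(Q))\ \ge\ \|\nabla f(Q)\|^2 . \]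
   Context: $I_{k,n-k}=\operatorname{diag}(I_k,-I_{n-k})$. The tangent space of $\mathrm{Gr}(k,n)$ at $Q$ is $\{X\in\mathbb{R}^{n\times n}:X^{\mathsf T}=X,\ XQ+QX=0\}$. $\|\nabla f(Q)\|$ is the Frobenius norm and $\|\Lambda\|$ is the spectral (operator) norm of $\Lambda$. *)

From HB Require Import structures.
From mathcomp Require Import all_boot all_order all_algebra.
From mathcomp Require Import classical_sets reals.
Set Implicit Arguments. Unset Strict Implicit. Unset Printing Implicit Defensive.
Import Order.TTheory GRing.Theory Num.Theory.
Local Open Scope ring_scope.
Local Open Scope classical_set_scope.

Section Defs.
Variable R : realType.
Variable n : nat.

Definition orthogonal_mx (Q : 'M[R]_n) : Prop := Q^T *m Q = 1%:M.

Definition in_Gr (k : nat) (Q : 'M[R]_n) : Prop :=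
  [/\ orthogonal_mx Q, Q^T = Q & \tr Q = (2 * k)%:R - n%:R].

Definition tangent_Gr (Q X : 'M[R]_n) : Prop := X^T = X /\ X *m Q + Q *m X = 0.

Definition fA (A Q : 'M[R]_n) : R := \tr (A^T *m Q).

(* Riemannian gradient of f at Q for metric <X,Y>_Q = tr(XY): the tangent
   vector G with <G,X>_Q = Df(Q)[X] = tr(A^T X) for all tangent X
   (f is the restriction of the linear map Q |-> tr(A^T Q)). *)
Definition is_riem_grad (A Q G : 'M[R]_n) : Prop :=
  tangent_Gr Q G /\ forall X, tangent_Gr Q X -> \tr (G *m X) = \tr (A^T *m X).

Definition Ikn (k : nat) : 'M[R]_n :=
  diag_mx (\row_(i < n) (if (i < k)%N then 1 else -1 : R)).

Definition vnorm (x : 'cV[R]_n) : R := Num.sqrt (\sum_i x i 0 ^+ 2).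

Definition spec_norm (M : 'M[R]_n) : R :=
  sup [set r : R | exists x : 'cV[R]_n, vnorm x <= 1 /\ r = vnorm (M *m x)].

Definition frob_norm (M : 'M[R]_n) : R := Num.sqrt (\sum_i \sum_j M i j ^+ 2).

End Defs.

From HB Require Import structures.
From mathcomp Require Import all_boot all_order all_algebra.
From mathcomp Require Import classical_sets reals ring lra.
Import Order.TTheory GRing.Theory Num.Theory.
Local Open Scope ring_scope.
Set Implicit Arguments. Unset Strict Implicit. Unset Printing Implicit Defensive.

(* In the eigenbasis of the symmetric part S = (A + A^T)/2, a point Q of Gr(k,n)
   becomes a symmetric orthogonal matrix M = U^T Q U with tr M = 2k - n, and
   f(Q) = sum_i lam_i M_ii while f(Qstar) = sum_i lam_i d_i, where d is the diagonal
   of I_{k,n-k}.  As sum_i d_i = sum_i M_ii, the gap f(Qstar) - f(Q) is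
   sum_i (lam_i - c)(d_i - M_ii) for c = lam_k, a sum of nonnegative terms since
   lam_i - c has the sign of d_i and |M_ii| <= 1.
   Since Q^2 = 1 and QX = -XQ for tangent X, (B - QBQ)/4 with B = A + A^T is the
   gradient, and in the eigenbasis it is (DM - MD)M/2, so
   4 |grad f(Q)|^2 = sum_ij (lam_i - lam_j)^2 M_ij^2.  Off the diagonal,
   (lam_i - lam_j)^2 <= 2|Lambda| (|lam_i - c| + |lam_j - c|); since the rows and
   columns of (M_ij^2) sum to 1, this bounds the sum by
   4|Lambda| sum_i |lam_i - c| (1 - M_ii^2), and each term of the latter is at
   most twice the corresponding term of the gap. *)

Lemma sqr_sub_le_mul_normD (R : realDomainType) (x y t : R) :
  `|x - y| <= t -> (x - y) ^+ 2 <= t * (`|x| + `|y|).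
Proof.
move=> hxy; rewrite -real_normK ?num_real // expr2.
apply: ler_pM => //; exact: ler_normB.
Qed.

Lemma norm_mul_sqr_compl_le (R : realDomainType) (d mu m : R) :
  d = 1 \/ d = -1 -> 0 <= mu * d -> m ^+ 2 <= 1 ->
  `|mu| * (1 - m ^+ 2) <= 2 * (mu * (d - m)).
Proof.
move=> [->|->] hmu hm.
  rewrite mulr1 in hmu; rewrite ger0_norm //.
  have := mulr_ge0 hmu (sqr_ge0 (1 - m)); nra.
rewrite mulrN1 in hmu; rewrite ler0_norm -?oppr_ge0 //.
have := mulr_ge0 hmu (sqr_ge0 (1 + m)); nra.
Qed.

Section SquareStochastic.
Variables (R : realDomainType) (n : nat) (M : 'M[R]_n).
Hypothesis row_sqr : forall i, \sum_j M i j ^+ 2 = 1.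
Hypothesis col_sqr : forall j, \sum_i M i j ^+ 2 = 1.

Lemma diag_sqr_le1 i : M i i ^+ 2 <= 1.
Proof.
by rewrite -(row_sqr i) (bigD1 i) //= lerDl sumr_ge0 // => j _; apply: sqr_ge0.
Qed.

Lemma sum_weightD_sqr (w : 'I_n -> R) :
  \sum_i \sum_j (w i + w j) * M i j ^+ 2 = 2 * \sum_i w i.
Proof.
have wl : \sum_i \sum_j w i * M i j ^+ 2 = \sum_i w i.
  by apply: eq_bigr => i _; rewrite -mulr_sumr row_sqr mulr1.
have wr : \sum_i \sum_j w j * M i j ^+ 2 = \sum_i w i.
  by rewrite exchange_big; apply: eq_bigr => j _; rewrite -mulr_sumr col_sqr mulr1.
rewrite (eq_bigr _ (fun i _ => eq_bigr _ (fun j _ => mulrDl _ _ _))).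
under eq_bigr do rewrite big_split.
by rewrite big_split /= wl wr; ring.
Qed.

Lemma sum_sqr_sub_mul_le (mu : 'I_n -> R) (t : R) :
  (forall i j, `|mu i - mu j| <= t) ->
  \sum_i \sum_j ((mu i - mu j) * M i j) ^+ 2 <=
  2 * t * \sum_i `|mu i| * (1 - M i i ^+ 2).
Proof.
move=> mu_spread.
(* The diagonal terms vanish on the left, so only the off-diagonal weights are paid for. *)
pose h i j := t * ((`|mu i| + `|mu j|) * M i j ^+ 2).
have row_le i : \sum_j ((mu i - mu j) * M i j) ^+ 2 <= \sum_j h i j - h i i.
  rewrite (bigD1 i) //= subrr mul0r expr0n add0r.
  rewrite [X in _ <= X - _](bigD1 i) //= addrAC subrr add0r.
  apply: ler_sum => j _.
  rewrite exprMn /h [t * _]mulrA; apply: ler_wpM2r; first exact: sqr_ge0.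
  exact: sqr_sub_le_mul_normD.
apply: le_trans (ler_sum _ (fun i _ => row_le i)) _.
have sum_h : \sum_i \sum_j h i j = t * (2 * \sum_i `|mu i|).
  by rewrite -sum_weightD_sqr mulr_sumr; apply: eq_bigr => i _; rewrite mulr_sumr.
rewrite sumrB; suff -> : \sum_i \sum_j h i j - \sum_i h i i =
          2 * t * \sum_i `|mu i| * (1 - M i i ^+ 2) by [].
by rewrite sum_h /h !mulr_sumr -sumrB; apply: eq_bigr => i _; ring.
Qed.
End SquareStochastic.

Section SignSplit.
Variables (R : realDomainType) (n : nat) (d lam : 'I_n -> R) (c : R) (M : 'M[R]_n).
Hypothesis d_sign : forall i, d i = 1 \/ d i = -1.
Hypothesis lam_split : forall i, 0 <= (lam i - c) * d i.
Hypothesis row_sqr : forall i, \sum_j M i j ^+ 2 = 1.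
Hypothesis col_sqr : forall j, \sum_i M i j ^+ 2 = 1.
Hypothesis trace_d : \sum_i d i = \tr M.

Lemma gap_shift :
  \sum_i lam i * (d i - M i i) = \sum_i (lam i - c) * (d i - M i i).
Proof.
under [RHS]eq_bigr => i _ do rewrite mulrBl.
by rewrite sumrB -mulr_sumr sumrB trace_d subrr mulr0 subr0.
Qed.

Lemma norm_weight_le_gap :
  \sum_i `|lam i - c| * (1 - M i i ^+ 2) <= 2 * \sum_i lam i * (d i - M i i).
Proof.
rewrite gap_shift mulr_sumr; apply: ler_sum => i _.
exact: norm_mul_sqr_compl_le (diag_sqr_le1 row_sqr i).
Qed.

Lemma gap_ge0 : 0 <= \sum_i lam i * (d i - M i i).
Proof.
rewrite -(pmulr_rge0 _ (ltr0Sn R 1)); apply: le_trans norm_weight_le_gap.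
apply: sumr_ge0 => i _; rewrite mulr_ge0 // subr_ge0; exact: diag_sqr_le1.
Qed.

Lemma sum_sqr_commutator_le_gap (t : R) :
  (forall i j, `|lam i - lam j| <= t) ->
  \sum_i \sum_j ((lam i - lam j) * M i j) ^+ 2 <=
  4 * t * \sum_i lam i * (d i - M i i).
Proof.
move=> lam_spread.
have [t_lt0 | t_ge0] := ltP t 0.
  have no_index (i : 'I_n) : False.
    by have := lam_spread i i; rewrite subrr normr0 leNgt t_lt0.
  by rewrite !big1 ?mulr0 // => i; case: (no_index i).
have shift i j : lam i - lam j = (lam i - c) - (lam j - c) by rewrite opprB addrA subrK.
under eq_bigr => i _ do under eq_bigr => j _ do rewrite shift.
apply: le_trans (sum_sqr_sub_mul_le row_sqr col_sqr _) _.
  by move=> i j; rewrite -shift.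
have -> : 4 * t * \sum_i lam i * (d i - M i i) =
          2 * t * (2 * \sum_i lam i * (d i - M i i)) by ring.
by rewrite ler_wpM2l ?mulr_ge0 ?norm_weight_le_gap.
Qed.
End SignSplit.

Lemma sorted_sign_split (R : realDomainType) (n k : nat) (lam : 'I_n -> R) :
  (1 <= k <= n)%N -> (forall i j : 'I_n, (i <= j)%N -> lam j <= lam i) ->
  exists c, forall i : 'I_n, 0 <= (lam i - c) * (if (i < k)%N then 1 else -1).
Proof.
case/andP=> k_gt0 k_le_n lam_sorted.
have k1_lt_n : (k.-1 < n)%N by rewrite prednK.
exists (lam (Ordinal k1_lt_n)) => i; case: ifP => i_k.
  by rewrite mulr1 subr_ge0 lam_sorted //= -ltnS prednK.
rewrite mulrN1 oppr_ge0 subr_le0 lam_sorted //=.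
by apply: leq_trans (leq_pred k) _; rewrite leqNgt i_k.
Qed.

Lemma tr_mul_trmxE (R : comNzRingType) n (X : 'M[R]_n) :
  \tr (X *m X^T) = \sum_i \sum_j X i j ^+ 2.
Proof.
by apply: eq_bigr => i _; rewrite !mxE; apply: eq_bigr => j _; rewrite mxE expr2.
Qed.

Lemma tr_mul_trmx_eq0 (R : realDomainType) n (X : 'M[R]_n) :
  \tr (X *m X^T) = 0 -> X = 0.
Proof.
rewrite tr_mul_trmxE => sum0; apply/matrixP => i j; rewrite mxE.
have row0 := psumr_eq0P (fun i _ => sumr_ge0 _ (fun j _ => sqr_ge0 (X i j))) sum0.
have := psumr_eq0P (fun j _ => sqr_ge0 (X i j)) (row0 i isT).
by move=> /(_ j isT) /eqP; rewrite sqrf_eq0 => /eqP.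
Qed.

Lemma tr_mul_trmx_conj (R : comNzRingType) n (U Y : 'M[R]_n) :
  U^T *m U = 1%:M ->
  \tr ((U *m Y *m U^T) *m (U *m Y *m U^T)^T) = \tr (Y *m Y^T).
Proof.
move=> hU; rewrite !trmx_mul trmxK -!mulmxA (mulmxA U^T U) hU mul1mx.
by rewrite mxtrace_mulC -!mulmxA hU mulmx1.
Qed.

Lemma col_sqr_orthogonal (R : comNzRingType) n (M : 'M[R]_n) j :
  M^T *m M = 1%:M -> \sum_i M i j ^+ 2 = 1.
Proof.
move=> /(congr1 (fun X : 'M[R]_n => X j j)); rewrite !mxE eqxx mulr1n => <-.
by apply: eq_bigr => i _; rewrite mxE expr2.
Qed.

Lemma commutator_diag_mxE (R : comNzRingType) n (lam : 'rV[R]_n) (M : 'M[R]_n) i j :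
  (diag_mx lam *m M - M *m diag_mx lam) i j = (lam 0 i - lam 0 j) * M i j.
Proof. by rewrite mul_diag_mx mul_mx_diag !mxE mulrBl [M i j * _]mulrC. Qed.

Section Grassmannian.
Variables (R : realType) (n k : nat).
Implicit Types Q U : 'M[R]_n.

Lemma orthogonal_mx_tr U : orthogonal_mx U -> orthogonal_mx U^T.
Proof. by rewrite /orthogonal_mx trmxK => /mulmx1C. Qed.

Lemma in_Gr_conj U Q : orthogonal_mx U -> in_Gr k Q -> in_Gr k (U *m Q *m U^T).
Proof.
move=> hU [hQ Q_sym Q_tr]; split.
- rewrite /orthogonal_mx !trmx_mul trmxK Q_sym -!mulmxA (mulmxA U^T U) hU mul1mx.
  by rewrite (mulmxA Q) -{1}Q_sym hQ mul1mx; exact: mulmx1C.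
- by rewrite !trmx_mul trmxK Q_sym mulmxA.
- by rewrite mxtrace_mulC mulmxA hU mul1mx.
Qed.

Lemma in_Gr_mulmx_self Q : in_Gr k Q -> Q *m Q = 1%:M.
Proof. by case=> hQ Q_sym _; rewrite -{1}Q_sym. Qed.

Lemma in_Gr_row_sqr Q i : in_Gr k Q -> \sum_j Q i j ^+ 2 = 1.
Proof.
case=> hQ Q_sym _; rewrite -(col_sqr_orthogonal i (orthogonal_mx_tr hQ)).
by apply: eq_bigr => j _; rewrite mxE.
Qed.

Lemma in_Gr_col_sqr Q j : in_Gr k Q -> \sum_i Q i j ^+ 2 = 1.
Proof. by case=> hQ _ _; exact: col_sqr_orthogonal. Qed.

Lemma Ikn_diag i : Ikn R n k i i = if (i < k)%N then 1 else -1.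
Proof. by rewrite !mxE eqxx mulr1n. Qed.

Lemma mxtrace_Ikn : (k <= n)%N -> \tr (Ikn R n k) = (2 * k)%:R - n%:R.
Proof.
move=> k_le_n; rewrite /mxtrace (eq_bigr _ (fun i _ => Ikn_diag i)).
rewrite -(big_mkord xpredT (fun i => if (i < k)%N then 1 else -1)).
rewrite (@big_cat_nat _ _ _ k 0 n _ _ (leq0n k) k_le_n) /=.
rewrite (@eq_big_nat _ _ _ 0 k _ (fun _ => 1)); last by move=> i /andP[_ ->].
rewrite (@eq_big_nat _ _ _ k n _ (fun _ => -1)); last first.
  by move=> i /andP[k_le_i _]; rewrite ltnNge k_le_i.
by rewrite !sumr_const_nat subn0 mulNrn natrM natrB //; lra.
Qed.

Lemma in_Gr_Ikn : (k <= n)%N -> in_Gr k (Ikn R n k).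
Proof.
move=> k_le_n; have Ikn_sym : (Ikn R n k)^T = Ikn R n k by rewrite tr_diag_mx.
split => //; last exact: mxtrace_Ikn.
rewrite /orthogonal_mx Ikn_sym mul_diag_mx; apply/matrixP => i j; rewrite !mxE.
case: eqVneq => [->|_]; last by rewrite mulr0n mulr0.
by case: ifP => _; rewrite mulr1n ?mulr1 ?mulrNN ?mulr1.
Qed.

Lemma in_Gr_trace_Ikn Q : (k <= n)%N -> in_Gr k Q -> \sum_i Ikn R n k i i = \tr Q.
Proof. by move=> k_le_n [_ _ ->]; rewrite -mxtrace_Ikn. Qed.

End Grassmannian.

Section RiemannianGradient.
Variables (R : realType) (n : nat) (A : 'M[R]_n).
Implicit Types G Q : 'M[R]_n.

Definition grad_Gr Q : 'M[R]_n := 4%:R^-1 *: (A + A^T - Q *m A *m Q - Q *m A^T *m Q).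

Lemma sub_conj_sym_part Q :
  A + A^T - Q *m A *m Q - Q *m A^T *m Q = (A + A^T) - Q *m (A + A^T) *m Q.
Proof. by rewrite mulmxDr mulmxDl opprD addrA. Qed.

Lemma is_riem_grad_Gr Q : Q^T = Q -> Q *m Q = 1%:M -> is_riem_grad A Q (grad_Gr Q).
Proof.
move=> Q_sym QQ; rewrite /grad_Gr sub_conj_sym_part; set B := A + A^T.
have B_sym : B^T = B by rewrite linearD /= trmxK addrC.
split; first split.
- by rewrite linearZ /= linearB /= !trmx_mul Q_sym B_sym mulmxA.
- have QBQQ : Q *m B *m Q *m Q = Q *m B by rewrite -mulmxA QQ mulmx1.
  have QQBQ : Q *m (Q *m B *m Q) = B *m Q by rewrite !mulmxA QQ mul1mx.
  rewrite -scalemxAl -scalemxAr -scalerDr mulmxBl mulmxBr QBQQ QQBQ.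
  by rewrite addrC subrKA subrr scaler0.
move=> X [X_sym QX]; have XQ : Q *m X = - (X *m Q) by apply/eqP; rewrite -addr_eq0 addrC QX.
have trQBQX : \tr (Q *m B *m Q *m X) = - \tr (B *m X).
  by rewrite -mulmxA XQ mulmxN linearN /= mulmxA mxtrace_mulC !mulmxA QQ mul1mx.
have trAX : \tr (A *m X) = \tr (A^T *m X).
  by rewrite -mxtrace_tr trmx_mul X_sym mxtrace_mulC.
rewrite -scalemxAl mxtraceZ mulmxBl linearB /= trQBQX /B mulmxDl linearD /= trAX.
by set t := \tr (A^T *m X); lra.
Qed.

Lemma riem_grad_unique Q G1 G2 :
  is_riem_grad A Q G1 -> is_riem_grad A Q G2 -> G1 = G2.
Proof.
move=> [[G1_sym G1Q] G1_grad] [[G2_sym G2Q] G2_grad].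
have D_tangent : tangent_Gr Q (G1 - G2).
  split; first by rewrite linearB /= G1_sym G2_sym.
  by rewrite mulmxBl mulmxBr addrACA -opprD G1Q G2Q subrr.
apply/eqP; rewrite -subr_eq0; apply/eqP/tr_mul_trmx_eq0.
by rewrite D_tangent.1 {1}mulmxBl linearB /= G1_grad // G2_grad // subrr.
Qed.

Lemma riem_grad_GrP Q G : Q^T = Q -> Q *m Q = 1%:M ->
  is_riem_grad A Q G <-> G = grad_Gr Q.
Proof.
move=> Q_sym QQ; have grad := is_riem_grad_Gr Q_sym QQ.
by split=> [/riem_grad_unique/(_ grad) | ->].
Qed.

End RiemannianGradient.

Lemma spec_norm_diag_ge (R : realType) n (lam : 'rV[R]_n) i :
  `|lam 0 i| <= spec_norm (diag_mx lam).
Proof.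
have sum_delta (F : 'I_n -> R) : \sum_j F j * delta_mx i 0 j 0 ^+ 2 = F i.
  rewrite (bigD1 i) //= big1 => [|j /negbTE ji]; rewrite mxE ?ji ?expr0n ?mulr0 //.
  by rewrite !eqxx expr1n mulr1 addr0.
set e : 'cV[R]_n := delta_mx i 0.
have e_norm : vnorm e = 1.
  rewrite /vnorm -sqrtr1; congr Num.sqrt.
  by under eq_bigr => j _ do rewrite -[_ ^+ 2]mul1r; rewrite sum_delta.
have lam_e_norm : vnorm (diag_mx lam *m e) = `|lam 0 i|.
  rewrite /vnorm -sqrtr_sqr; congr Num.sqrt.
  by under eq_bigr => j _ do rewrite mul_diag_mx mxE exprMn; rewrite sum_delta.
rewrite /spec_norm; apply: sup_upper_bound; last by exists e; rewrite e_norm lam_e_norm.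
split; first by exists `|lam 0 i|, e; rewrite e_norm lam_e_norm.
exists (Num.sqrt (\sum_j lam 0 j ^+ 2)) => _ [x [x_norm ->]].
have x_sqr : \sum_j x j 0 ^+ 2 <= 1.
  by move: x_norm; rewrite /vnorm -{1}sqrtr1 ler_sqrt // sqrtr1.
rewrite /vnorm ler_sqrt; last by apply: sumr_ge0 => j _; apply: sqr_ge0.
apply: ler_sum => j _; rewrite mul_diag_mx mxE exprMn.
apply: ler_piMr; first exact: sqr_ge0.
apply: le_trans x_sqr; rewrite (bigD1 j) //= lerDl.
by apply: sumr_ge0 => l _; apply: sqr_ge0.
Qed.

Lemma frob_norm_sqr (R : realType) n (X : 'M[R]_n) : frob_norm X ^+ 2 = \tr (X *m X^T).
Proof.
rewrite /frob_norm sqr_sqrtr; first by rewrite tr_mul_trmxE.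
by apply: sumr_ge0 => i _; apply: sumr_ge0 => j _; apply: sqr_ge0.
Qed.

Section Eigendecomposition.
Variables (R : realType) (n k : nat) (A U : 'M[R]_n) (lam : 'rV[R]_n).
Hypothesis U_orth : orthogonal_mx U.
Hypothesis A_eig : 2%:R^-1 *: (A + A^T) = U *m diag_mx lam *m U^T.
Implicit Types Q : 'M[R]_n.

Let D := diag_mx lam.
Let J := Ikn R n k.

Lemma in_Gr_eig_coords Q : in_Gr k Q -> in_Gr k (U^T *m Q *m U).
Proof. by move/(in_Gr_conj (orthogonal_mx_tr U_orth)); rewrite trmxK. Qed.

Lemma fA_eig Q : Q^T = Q -> fA A Q = \sum_i lam 0 i * (U^T *m Q *m U) i i.
Proof.
move=> Q_sym; have trAQ : \tr (A *m Q) = \tr (A^T *m Q).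
  by rewrite -mxtrace_tr trmx_mul Q_sym mxtrace_mulC.
have -> : fA A Q = \tr (2%:R^-1 *: (A + A^T) *m Q).
  rewrite -scalemxAl mxtraceZ mulmxDl linearD /= trAQ /fA.
  by set t := \tr (A^T *m Q); lra.
rewrite A_eig -!mulmxA mxtrace_mulC -!mulmxA /mxtrace.
by apply: eq_bigr => i _; rewrite mul_diag_mx mxE !mulmxA.
Qed.

Lemma fA_gap Q : Q^T = Q ->
  fA A (U *m J *m U^T) - fA A Q = \sum_i lam 0 i * (J i i - (U^T *m Q *m U) i i).
Proof.
move=> Q_sym; have J_sym : J^T = J by rewrite tr_diag_mx.
have UJU_sym : (U *m J *m U^T)^T = U *m J *m U^T by rewrite !trmx_mul trmxK J_sym mulmxA.
rewrite !fA_eig // -sumrB; apply: eq_bigr => i _.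
by rewrite !mulmxA U_orth mul1mx -mulmxA U_orth mulmx1 mulrBr.
Qed.

Lemma grad_Gr_eig Q :
  grad_Gr A Q = 2%:R^-1 *:
    (U *m (D - (U^T *m Q *m U) *m D *m (U^T *m Q *m U)) *m U^T).
Proof.
have UUt := mulmx1C U_orth.
have AAt : A + A^T = 2%:R *: (U *m D *m U^T).
  by rewrite -A_eig scalerA mulfV ?scale1r // pnatr_eq0.
rewrite /grad_Gr sub_conj_sym_part AAt -scalemxAr -scalemxAl -scalerBr scalerA.
have -> : (4%:R^-1 * 2%:R : R) = 2%:R^-1 by field.
congr (_ *: _); rewrite mulmxBr mulmxBl; congr (_ - _).
by rewrite !mulmxA UUt mul1mx -!mulmxA UUt mulmx1.
Qed.

Lemma frob_norm_grad_Gr Q : in_Gr k Q ->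
  frob_norm (grad_Gr A Q) ^+ 2 =
  4%:R^-1 * \sum_i \sum_j ((lam 0 i - lam 0 j) * (U^T *m Q *m U) i j) ^+ 2.
Proof.
move=> Q_Gr; set M := U^T *m Q *m U; have M_Gr : in_Gr k M := in_Gr_eig_coords Q_Gr.
have MM := in_Gr_mulmx_self M_Gr.
have [_ M_sym _] := M_Gr.
have commutator : D - M *m D *m M = (D *m M - M *m D) *m M.
  by rewrite mulmxBl -[D *m M *m M]mulmxA MM mulmx1.
rewrite grad_Gr_eig -/M frob_norm_sqr linearZ /= -scalemxAl -scalemxAr !mxtraceZ mulrA.
rewrite tr_mul_trmx_conj // commutator trmx_mul M_sym -mulmxA (mulmxA M) MM mul1mx.
have -> : (2%:R^-1 * 2%:R^-1 : R) = 4%:R^-1 by field.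
by rewrite tr_mul_trmxE; congr (_ * _); apply: eq_bigr => i _; apply: eq_bigr => j _;
  rewrite commutator_diag_mxE.
Qed.

Hypothesis k_bounds : (1 <= k <= n)%N.
Hypothesis lam_sorted : forall i j : 'I_n, (i <= j)%N -> lam 0 j <= lam 0 i.

Let k_le_n : (k <= n)%N. Proof. by case/andP: k_bounds. Qed.

Let Ikn_sign i : J i i = 1 \/ J i i = -1.
Proof. by rewrite /J Ikn_diag; case: ifP; [left | right]. Qed.

Let lam_split : exists c, forall i, 0 <= (lam 0 i - c) * J i i.
Proof.
have [c lam_c] := sorted_sign_split k_bounds lam_sorted.
by exists c => i; rewrite /J Ikn_diag.
Qed.

Lemma fA_le_eig_Ikn Q : in_Gr k Q -> fA A Q <= fA A (U *m J *m U^T).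
Proof.
move=> Q_Gr; have [_ Q_sym _] := Q_Gr; have M_Gr := in_Gr_eig_coords Q_Gr.
have [c lam_c] := lam_split.
rewrite -subr_ge0 fA_gap //; apply: (gap_ge0 Ikn_sign lam_c).
- by move=> i; exact: in_Gr_row_sqr M_Gr.
- exact: in_Gr_trace_Ikn k_le_n M_Gr.
Qed.

Lemma frob_norm_grad_Gr_le Q : in_Gr k Q ->
  frob_norm (grad_Gr A Q) ^+ 2 <=
  2%:R * spec_norm D * (fA A (U *m J *m U^T) - fA A Q).
Proof.
move=> Q_Gr; have [_ Q_sym _] := Q_Gr; have M_Gr := in_Gr_eig_coords Q_Gr.
have [c lam_c] := lam_split.
have lam_spread i j : `|lam 0 i - lam 0 j| <= 2%:R * spec_norm D.
  apply: le_trans (ler_normB _ _) _; rewrite mulr2n mulrDl mul1r.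
  by apply: lerD; exact: spec_norm_diag_ge.
rewrite frob_norm_grad_Gr // fA_gap // ler_pdivrMl ?ltr0n // mulrA.
apply: (sum_sqr_commutator_le_gap Ikn_sign lam_c _ _ _ lam_spread).
- by move=> i; exact: in_Gr_row_sqr M_Gr.
- by move=> j; exact: in_Gr_col_sqr M_Gr.
- exact: in_Gr_trace_Ikn k_le_n M_Gr.
Qed.

End Eigendecomposition.

Unset Implicit Arguments.

Theorem lemma6p1 (R : realType) (n k : nat) (A U : 'M[R]_n) (lam : 'rV[R]_n) :
  (1 <= k <= n)%N ->
  orthogonal_mx U ->
  (forall i j : 'I_n, (i <= j)%N -> lam 0 j <= lam 0 i) ->
  2%:R^-1 *: (A + A^T) = U *m diag_mx lam *m U^T ->
  let gradf := fun Q : 'M[R]_n =>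
    4%:R^-1 *: (A + A^T - Q *m A *m Q - Q *m A^T *m Q) in
  let Qstar := U *m (@Ikn R n k) *m U^T in
  [/\ forall Q, in_Gr k Q -> forall G, is_riem_grad A Q G <-> G = gradf Q,
      in_Gr k Qstar,
      forall Q, in_Gr k Q -> fA A Q <= fA A Qstar
    & forall Q, in_Gr k Q ->
        frob_norm (gradf Q) ^+ 2 <= 2%:R * spec_norm (diag_mx lam) * (fA A Qstar - fA A Q)].
Proof.
move=> k_bounds U_orth lam_sorted A_eig gradf Qstar.
have k_le_n : (k <= n)%N by case/andP: k_bounds.
split=> [Q Q_Gr G | | Q Q_Gr | Q Q_Gr].
- have [_ Q_sym _] := Q_Gr; exact: riem_grad_GrP Q_sym (in_Gr_mulmx_self Q_Gr).
- exact: in_Gr_conj U_orth (in_Gr_Ikn R k_le_n).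
- exact: (fA_le_eig_Ikn U_orth A_eig k_bounds lam_sorted Q_Gr).
- exact: (frob_norm_grad_Gr_le U_orth A_eig k_bounds lam_sorted Q_Gr).
Qed.
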